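(* Let $\mathcal{N}$ denote the class of all networks $(X,A_X)$, where $X$ is a finite nonempty set and $A_X:X\times X\to\mathbb{R}$ satisfies $A_X(x,x')\ge 0$ for all $x,x'\in X$, with $A_X(x,x')=0$ if and only if $x=x'$ ($A_X$ need not be symmetric nor satisfy the triangle inequality). For a network $(X,A_X)$ define $\bar A_X(x,x')=\max\big(A_X(x,x'),A_X(x',x)\big)$ and $$u^R_X(x,x')=\min_{C(x,x')}\ \max_{0\le i\le l-1}\bar A_X(x_i,x_{i+1}),$$ where the minimum is over all chains $C(x,x')=[x=x_0,x_1,\dots,x_l=x']$ of nodes of $X$ from $x$ to $x'$. Let $\mathcal{H}^R$ be the method assigning to each network $(X,A_X)$ the function $u^R_X$ on $X\times X$. Then: (i) for every network $(X,A_X)\in\mathcal{N}$, $u^R_X$ is an ultrametric on $X$; and (ii) $\mathcal{H}^R$ satisfies the Axiom of Value (A1) and the Axiom of Transformation (A2).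
   Context: An ultrametric on a finite set $X$ is a function $u_X:X\times X\to\mathbb{R}$ that is nonnegative, symmetric ($u_X(x,x')=u_X(x',x)$), satisfies $u_X(x,x')=0$ iff $x=x'$, and satisfies the strong triangle inequality $u_X(x,x')\le\max\big(u_X(x,x''),u_X(x'',x')\big)$ for all $x,x',x''\in X$. A (hierarchical) clustering method $\mathcal{H}$ is a map assigning to every network $(X,A_X)$ an ultrametric $u_X$ on $X$ (equivalently a dendrogram on $X$; $u_X(x,x')$ is the smallest resolution at which $x,x'$ are clustered together). Axiom of Value (A1): for every two-node network $X=\{p,q\}$ with $A_X(p,q)=\alpha$, $A_X(q,p)=\beta$ (with $\alpha,\beta>0$), the output ultrametric satisfies $u_X(p,q)=\max(\alpha,\beta)$. Axiom of Transformation (A2): for any two networks $(X,A_X)$, $(Y,A_Y)$ and any map $\phi:X\to Y$ with $A_X(x,x')\ge A_Y(\phi(x),\phi(x'))$ for all $x,x'\in X$, the output ultrametrics $u_X=\mathcal{H}(X,A_X)$ and $u_Y=\mathcal{H}(Y,A_Y)$ satisfy $u_X(x,x')\ge u_Y(\phi(x),\phi(x'))$ for all $x,x'\in X$. *)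

From HB Require Import structures.
From mathcomp Require Import all_boot all_order all_algebra.
From mathcomp Require Import boolp classical_sets reals.
Set Implicit Arguments. Unset Strict Implicit. Unset Printing Implicit Defensive.
Import Order.TTheory GRing.Theory Num.Theory.
Local Open Scope classical_set_scope.
Local Open Scope ring_scope.

Definition is_network (R : realType) (X : finType) (A : X -> X -> R) : Prop :=
  (forall x x', 0 <= A x x') /\ (forall x x', A x x' = 0 <-> x = x').

Definition is_ultrametric (R : realType) (X : finType) (u : X -> X -> R) : Prop :=
  [/\ (forall x x', 0 <= u x x'),
      (forall x x', u x x' = u x' x),
      (forall x x', u x x' = 0 <-> x = x') &
      (forall x x' x'', u x x' <= Num.max (u x x'') (u x'' x'))].

Definition Abar (R : realType) (X : finType) (A : X -> X -> R) (x x' : X) : R :=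
  Num.max (A x x') (A x' x).

(* The chain [x = x_0, x_1, ..., x_l] is represented by its head x and the
   list s = [x_1; ...; x_l]; it ends at last x s. *)
Definition chain_cost (R : realType) (X : finType) (A : X -> X -> R)
    (x : X) (s : seq X) : R :=
  \big[Num.max/0]_(p <- zip (x :: s) s) Abar A p.1 p.2.

Definition is_chain (X : finType) (x x' : X) (s : seq X) : Prop := last x s = x'.

Definition uR (R : realType) (X : finType) (A : X -> X -> R) (x x' : X) : R :=
  xget 0 [set m : R | (exists s, is_chain x x' s /\ chain_cost A x s = m) /\
                      (forall s, is_chain x x' s -> m <= chain_cost A x s)].

(* Chain costs take only the finitely many values 0 and \bar A(x, y), so the
   minimum defining u^R exists, and u^R(x, x') <= t exactly when x and x' are
   joined by a chain of steps with \bar A <= t.  Reversing and concatenating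
   chains give symmetry and the strong triangle inequality; a chain whose
   steps are shorter than every nonzero dissimilarity cannot move, which gives
   separation and the value on two points; a map reducing dissimilarities
   sends chains to chains of no larger cost, which gives transformation. *)

From HB Require Import structures.
From mathcomp Require Import all_boot all_order all_algebra.
From mathcomp Require Import boolp classical_sets reals.
Import Order.TTheory GRing.Theory Num.Theory.
Local Open Scope ring_scope.

Set Implicit Arguments. Unset Strict Implicit.

Lemma exists_min_in_seq d (T : orderType d) (s : seq T) (P : T -> Prop) m0 :
  m0 \in s -> P m0 ->
  exists m, P m /\ forall m', m' \in s -> P m' -> (m <= m')%O.
Proof.
move=> s_m0 P_m0.
pose Q : {pred seq_sub s} := fun i => `[< P (val i) >].
have Q_m0 : Q (SeqSub s_m0) by apply/asboolP.
case: (arg_minP val Q_m0) => m /asboolP P_m min_m.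
exists (val m); split=> // m' s_m' P_m'.
by apply: (min_m (SeqSub s_m')); apply/asboolP.
Qed.

Lemma path_last_eq (T : eqType) (e : rel T) x s :
  (forall a b, e a b -> a = b) -> path e x s -> last x s = x.
Proof.
move=> e_eq; elim: s x => [//|y s IHs] x /= /andP[/e_eq <-]; exact: IHs.
Qed.

Lemma last_rev_belast (T : Type) (x : T) s : last (last x s) (rev (belast x s)) = x.
Proof. by case: s => //= y s; rewrite rev_cons last_rcons. Qed.

Section SingleLinkage.
Variables (R : realType) (X : finType) (A : X -> X -> R).

Lemma chain_cost_nil x : chain_cost A x [::] = 0.
Proof. by rewrite /chain_cost big_nil. Qed.

Lemma chain_cost_cons x y s :
  chain_cost A x (y :: s) = Num.max (Abar A x y) (chain_cost A y s).
Proof. by rewrite /chain_cost /= big_cons. Qed.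

Lemma chain_cost_le t x s : 0 <= t ->
  (chain_cost A x s <= t) = path (fun a b => Abar A a b <= t) x s.
Proof.
move=> t_ge0; elim: s x => [|y s IHs] x /=; first by rewrite chain_cost_nil.
by rewrite chain_cost_cons ge_max IHs.
Qed.

Definition chain_cost_values : seq R :=
  0 :: [seq Abar A p.1 p.2 | p <- enum {: X * X}].

Lemma chain_cost_in_values x s : chain_cost A x s \in chain_cost_values.
Proof.
elim: s x => [|y s IHs] x; first by rewrite chain_cost_nil mem_head.
rewrite chain_cost_cons; case: leP => // _.
by rewrite inE; apply/orP; right; apply/mapP; exists (x, y); rewrite ?mem_enum.
Qed.

Lemma uR_minimal x x' :
  (exists s, is_chain x x' s /\ chain_cost A x s = uR A x x') /\
  (forall s, is_chain x x' s -> uR A x x' <= chain_cost A x s).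
Proof.
rewrite /uR; set S := (X in xget 0 X).
suff: S (xget 0 S) by case=> [[s [chain_s cost_s]] min_s]; split; first exists s.
apply: xgetPex.
have [m [[s [chain_s cost_s]] min_m]] := exists_min_in_seq
  (P := fun m => exists s, is_chain x x' s /\ chain_cost A x s = m)
  (chain_cost_in_values x [:: x']) (ex_intro _ [:: x'] (conj erefl erefl)).
exists m; split; first by exists s.
by move=> s' chain_s'; apply: min_m; [exact: chain_cost_in_values | exists s'].
Qed.

Lemma uR_le_chain t x x' s : 0 <= t -> last x s = x' ->
  path (fun a b => Abar A a b <= t) x s -> uR A x x' <= t.
Proof.
move=> t_ge0 last_s short_s; have [_ min_uR] := uR_minimal x x'.
by apply: le_trans (min_uR s last_s) _; rewrite chain_cost_le.
Qed.

Lemma Abar_sym a b : Abar A a b = Abar A b a.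
Proof. by rewrite /Abar maxC. Qed.

Hypothesis A_ge0 : forall x x', 0 <= A x x'.

Lemma Abar_ge0 a b : 0 <= Abar A a b.
Proof. by rewrite /Abar le_max A_ge0. Qed.

Lemma chain_cost_ge0 x s : 0 <= chain_cost A x s.
Proof.
elim: s x => [|y s IHs] x; first by rewrite chain_cost_nil.
by rewrite chain_cost_cons le_max Abar_ge0.
Qed.

Lemma uR_ge0 x x' : 0 <= uR A x x'.
Proof. by have [[s [_ <-]] _] := uR_minimal x x'; apply: chain_cost_ge0. Qed.

Lemma uR_chain x x' : exists s, last x s = x' /\
  path (fun a b => Abar A a b <= uR A x x') x s.
Proof.
have [[s [last_s cost_s]] _] := uR_minimal x x'.
by exists s; rewrite -chain_cost_le ?cost_s ?uR_ge0.
Qed.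

Lemma uR_sym x x' : uR A x x' = uR A x' x.
Proof.
suff uR_le_sym a b : uR A a b <= uR A b a by apply/eqP; rewrite eq_le !uR_le_sym.
have [s [last_s short_s]] := uR_chain b a.
apply: (uR_le_chain (s := rev (belast b s))); rewrite ?uR_ge0 -?last_s ?last_rev_belast //.
by rewrite rev_path; apply: sub_path short_s => c d; rewrite /= Abar_sym last_s.
Qed.

Lemma uR_le_max x x' x'' : uR A x x' <= Num.max (uR A x x'') (uR A x'' x').
Proof.
have [s1 [last_s1 short_s1]] := uR_chain x x''.
have [s2 [last_s2 short_s2]] := uR_chain x'' x'.
apply: (uR_le_chain (s := s1 ++ s2)); first by rewrite le_max uR_ge0.
  by rewrite last_cat last_s1.
rewrite cat_path last_s1; apply/andP; split.
  by apply: sub_path short_s1 => a b /= short_ab; rewrite le_max short_ab.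
by apply: sub_path short_s2 => a b /= short_ab; rewrite le_max short_ab orbT.
Qed.

Lemma uR_two_points p q : p != q -> (forall x, x = p \/ x = q) ->
  uR A p q = Abar A p q.
Proof.
move=> neq_pq X_pq; apply/eqP; rewrite eq_le; apply/andP; split.
  by apply: (uR_le_chain (s := [:: q])); rewrite //= ?Abar_ge0 ?lexx.
rewrite leNgt; apply/negP => uR_lt.
have [s [last_s short_s]] := uR_chain p q.
(* every step of a chain stays put, as \bar A(p, q) exceeds its cost *)
move: neq_pq; rewrite -last_s (path_last_eq _ short_s) ?eqxx // => a b.
by case: (X_pq a) => ->; case: (X_pq b) => -> //; rewrite 1?(Abar_sym q p) leNgt uR_lt.
Qed.

Hypothesis A_eq0 : forall x x', A x x' = 0 <-> x = x'.

Lemma uR_eq0 x x' : uR A x x' = 0 <-> x = x'.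
Proof.
split=> [uR_0 | <-]; last first.
  by apply/eqP; rewrite eq_le uR_ge0 andbT; apply: (uR_le_chain (s := [::])).
have [s [last_s short_s]] := uR_chain x x'.
rewrite -last_s (path_last_eq _ short_s) // => a b; rewrite uR_0 => Abar_le0.
apply/A_eq0/le_anti; rewrite A_ge0 andbT.
by apply: le_trans Abar_le0; rewrite le_max lexx.
Qed.

Lemma uR_ultrametric : is_ultrametric (uR A).
Proof. split; [exact: uR_ge0 | exact: uR_sym | exact: uR_eq0 | exact: uR_le_max]. Qed.

End SingleLinkage.

Lemma uR_contraction (R : realType) (X Y : finType) (AX : X -> X -> R)
    (AY : Y -> Y -> R) (phi : X -> Y) :
  (forall x x', 0 <= AX x x') ->
  (forall x x', AY (phi x) (phi x') <= AX x x') ->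
  forall x x', uR AY (phi x) (phi x') <= uR AX x x'.
Proof.
move=> AX_ge0 phi_contr x x'; have [s [last_s short_s]] := uR_chain AX_ge0 x x'.
apply: (uR_le_chain (s := map phi s)); rewrite ?(uR_ge0 AX_ge0) ?last_map ?last_s //.
rewrite path_map; apply: sub_path short_s => a b /=; apply: le_trans.
by rewrite /Abar ge_max !le_max (phi_contr a b) (phi_contr b a) orbT.
Qed.

Theorem proposition1 (R : realType) :
  (* (i) u^R_X is an ultrametric for every network *)
  (forall (X : finType) (A : X -> X -> R),
      (0 < #|X|)%N -> is_network A -> is_ultrametric (uR A)) /\
  (* (ii) Axiom of Value (A1) *)
  (forall (X : finType) (A : X -> X -> R) (p q : X) (alpha beta : R),
      p != q -> (forall x : X, x = p \/ x = q) -> is_network A ->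
      A p q = alpha -> A q p = beta -> 0 < alpha -> 0 < beta ->
      uR A p q = Num.max alpha beta) /\
  (* (ii) Axiom of Transformation (A2) *)
  (forall (X Y : finType) (AX : X -> X -> R) (AY : Y -> Y -> R) (phi : X -> Y),
      (0 < #|X|)%N -> is_network AX -> (0 < #|Y|)%N -> is_network AY ->
      (forall x x', AY (phi x) (phi x') <= AX x x') ->
      forall x x', uR AY (phi x) (phi x') <= uR AX x x').
Proof.
split; [|split].
- by move=> X A _ [A_ge0 A_eq0]; exact: uR_ultrametric A_ge0 A_eq0.
- move=> X A p q alpha beta neq_pq X_pq [A_ge0 _] A_pq A_qp _ _.
  by rewrite (uR_two_points A_ge0 neq_pq X_pq) /Abar A_pq A_qp.
- by move=> X Y AX AY phi _ [AX_ge0 _] _ _ phi_contr; exact: uR_contraction AX_ge0 phi_contr.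
Qed.
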